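(* Let $r \in \mathbb{Q}_{>1} \setminus \mathbb{N}$ (so $S_r$ is atomic). Let $x \in S_r \setminus \{0\}$ and let $z = \sum_{i=0}^N \alpha_i r^i \in \mathsf{Z}(x)$, where $N \in \mathbb{N}$ and $\alpha_0, \dots, \alpha_N \in \mathbb{N}_0$. Then: (1) $|z| = \min \mathsf{L}(x)$ if and only if $\alpha_i < \mathsf{n}(r)$ for all $i \in \{0, \dots, N\}$; (2) there is exactly one factorization in $\mathsf{Z}(x)$ of minimum length; (3) $|z| = \max \mathsf{L}(x)$ if and only if $\alpha_i < \mathsf{d}(r)$ for all $i \in \{1, \dots, N\}$; (4) there is exactly one factorization in $\mathsf{Z}(x)$ of maximum length; (5) $|\mathsf{Z}(x)| = 1$ if and only if $|\mathsf{L}(x)| = 1$, and in this case $\alpha_0 < \mathsf{n}(r)$ and $\alpha_i < \mathsf{d}(r)$ for all $i \in \{1, \dots, N\}$.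
   Context: For $q \in \mathbb{Q}_{>0}$, $\mathsf{n}(q)$ and $\mathsf{d}(q)$ denote the unique positive integers with $\gcd(\mathsf{n}(q),\mathsf{d}(q))=1$ and $q = \mathsf{n}(q)/\mathsf{d}(q)$. For $r \in \mathbb{Q}_{>0}$, $S_r$ denotes the additive submonoid of $(\mathbb{Q}_{\ge 0},+)$ generated by $\{r^n : n \in \mathbb{N}_0\}$. $S_r$ is atomic exactly when $r=1$ or $\mathsf{n}(r)>1$; if moreover $r \notin \mathbb{N}$, its atoms are exactly the pairwise distinct elements $r^n$, $n \in \mathbb{N}_0$. A factorization of $x \in S_r$ is a formal finite sum $\sum_i \alpha_i r^i$ with $\alpha_i \in \mathbb{N}_0$ whose value in $\mathbb{Q}$ is $x$; $\mathsf{Z}(x)$ is the set of factorizations of $x$, the length of $z=\sum_i \alpha_i r^i$ is $|z| = \sum_i \alpha_i$, and $\mathsf{L}(x) = \{|z| : z \in \mathsf{Z}(x)\}$. Two formal sums differing only by zero coefficients are identified. (For $r>1$, every $\mathsf{L}(x)$ is finite.) *)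

From HB Require Import structures.
From mathcomp Require Import all_boot all_order all_algebra.
Set Implicit Arguments. Unset Strict Implicit. Unset Printing Implicit Defensive.
Import Order.TTheory GRing.Theory Num.Theory.
Local Open Scope ring_scope.

Definition nq (q : rat) : nat := `|numq q|%N.
Definition dq (q : rat) : nat := `|denq q|%N.

(* A formal sum  sum_i a_i r^i  is represented by its coefficient sequence
   a = [:: a_0; ...; a_N]; coefficients beyond size a are 0. *)
Definition fval (r : rat) (a : seq nat) : rat :=
  \sum_(i < size a) (nth 0%N a i)%:R * r ^+ i.

Definition flen (a : seq nat) : nat := \sum_(i < size a) nth 0%N a i.

(* identification of formal sums differing only by zero coefficients *)
Definition fsame (a b : seq nat) : Prop := forall i, nth 0%N a i = nth 0%N b i.

Definition isFact (r x : rat) (a : seq nat) : Prop := fval r a = x.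

Definition isMinL (r x : rat) (n : nat) : Prop :=
  (exists a, isFact r x a /\ flen a = n) /\
  (forall a, isFact r x a -> (n <= flen a)%N).

Definition isMaxL (r x : rat) (n : nat) : Prop :=
  (exists a, isFact r x a /\ flen a = n) /\
  (forall a, isFact r x a -> (flen a <= n)%N).

(* |Z(x)| = 1 (given Z(x) nonempty): all factorizations are identified *)
Definition uniqZ (r x : rat) : Prop :=
  forall a b, isFact r x a -> isFact r x b -> fsame a b.

(* |L(x)| = 1 (given Z(x) nonempty) *)
Definition uniqL (r x : rat) : Prop :=
  forall a b, isFact r x a -> isFact r x b -> flen a = flen b.

From HB Require Import structures.
From mathcomp Require Import all_boot all_order all_algebra.
From mathcomp Require Import zify ring.
Set Implicit Arguments.
Unset Strict Implicit.
Unset Printing Implicit Defensive.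
Import Order.TTheory GRing.Theory Num.Theory.
Local Open Scope ring_scope.

(* Write r = n/d in lowest terms, so that 1 < d < n.  Since n r^i = d r^(i+1),
   trading n copies of the atom r^i for d copies of r^(i+1) preserves the value
   and shortens a factorization by n - d, while the reverse trade lengthens it.
   Hence a shortest factorization has all coefficients below n, and a longest
   one has all coefficients of positive degree below d.  Repeated trades bring
   any factorization into either shape, and each shape determines the
   factorization: after multiplying by d^K, the lowest coefficient is fixed
   modulo n and the highest one modulo d, because n and d are coprime.  For (5),
   if all lengths agree then every factorization is both shortest and longest,
   hence unique. *)

Lemma mul_dq r : 0 <= r -> r * (dq r)%:R = (nq r)%:R.
Proof.
move=> r_ge0; rewrite /nq /dq !natr_absz (gtr0_norm (denq_gt0 r)).
rewrite ger0_norm ?numq_ge0 // -{1}(divq_num_den r) mulfVK //.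
by rewrite intr_eq0 denq_neq0.
Qed.

Lemma dq_gt0 r : (0 < dq r)%N.
Proof. by rewrite absz_gt0 denq_neq0. Qed.

Lemma nq_gt0 r : 0 < r -> (0 < nq r)%N.
Proof. by move=> r_gt0; rewrite absz_gt0 numq_eq0 gt_eqF. Qed.

Lemma dq_gt1 r : denq r != 1 -> (1 < dq r)%N.
Proof. by move=> den_neq1; have := denq_gt0 r; rewrite /dq; lia. Qed.

Lemma dq_lt_nq r : 1 < r -> (dq r < nq r)%N.
Proof.
move=> r_gt1; rewrite -(ltr_nat rat) -mul_dq ?ltr_pMl ?ltr0n ?dq_gt0 //.
exact: le_trans ler01 (ltW r_gt1).
Qed.

Lemma eqn_modMr_coprime m k u v :
  coprime m k -> (u * k == v * k %[mod m]) = (u == v %[mod m]).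
Proof.
move=> co_mk; wlog le_vu : u v / (v <= u)%N.
  move=> wlog_uv; have [/wlog_uv //|/ltnW /wlog_uv] := leqP v u.
  by rewrite eq_sym [in RHS]eq_sym.
by rewrite !eqn_mod_dvd ?leq_mul2r ?le_vu ?orbT // -mulnBl Gauss_dvdl.
Qed.

Lemma sum_indicator (R : pzSemiRingType) (F : nat -> R) (c k M : nat) :
  (k < M)%N -> \sum_(j < M) ((j == k :> nat) * c)%:R * F j = c%:R * F k.
Proof.
move=> lt_kM; have := big_ord1_eq +%R (fun j => c%:R * F j) k M.
rewrite lt_kM big_mkcond /= => <-; apply: eq_bigr => j _.
by case: eqP; rewrite ?mul1n ?mul0n ?mul0r.
Qed.

Lemma descent T (R : T -> T -> Prop) (P : T -> Prop) (mu : T -> nat) :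
  (forall a, R a a) -> (forall a b c, R a b -> R b c -> R a c) ->
  (forall a, P a \/ exists2 b, R a b & (mu b < mu a)%N) ->
  forall a, exists2 b, R a b & P b.
Proof.
move=> R_refl R_trans step a; have [k] := ubnP (mu a).
elim: k a => // k IH a lt_ak; have [Pa|[b Rab lt_ba]] := step a.
  by exists a.
have [c Rbc Pc] := IH b (leq_trans lt_ba lt_ak).
by exists c => //; apply: R_trans Rbc.
Qed.

Lemma nth_ltn_or_geq (m : nat) (P : pred nat) (a : seq nat) :
  (forall i, P i && (i < size a)%N -> (nth 0 a i < m)%N) \/
  exists2 i, P i & (m <= nth 0 a i)%N.
Proof.
have [/hasP[i _ /andP[Pi le_mi]]|/hasPn small] :=
  boolP (has (fun i => P i && (m <= nth 0 a i)%N) (iota 0 (size a))).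
  by right; exists i.
left=> i /andP[Pi lt_i].
by have := small i; rewrite mem_iota lt_i Pi ltnNge; apply.
Qed.

Lemma nth_ltn_pad (m : nat) (P : pred nat) (a : seq nat) : (0 < m)%N ->
  (forall i, P i && (i < size a)%N -> (nth 0 a i < m)%N) ->
  forall i, P i -> (nth 0 a i < m)%N.
Proof.
move=> m_gt0 small i Pi; have [lt_i|le_i] := ltnP i (size a).
  by apply: small; rewrite Pi lt_i.
by rewrite nth_default.
Qed.

Lemma fval_widen r a M : (size a <= M)%N ->
  fval r a = \sum_(i < M) (nth 0 a i)%:R * r ^+ i.
Proof.
move=> le_aM; rewrite /fval.
rewrite (big_ord_widen M (fun i => (nth 0 a i)%:R * r ^+ i) le_aM) big_mkcond.
by apply: eq_bigr => i _; case: ltnP => //= le_ai; rewrite nth_default // mul0r.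
Qed.

Lemma flen_fval a : (flen a)%:R = fval 1 a.
Proof. by rewrite /flen natr_sum; apply: eq_bigr => i _; rewrite expr1n mulr1. Qed.

Lemma fsame_prefix a b K : (size a <= K.+1)%N -> (size b <= K.+1)%N ->
  (forall i, (i <= K)%N -> nth 0 a i = nth 0 b i) -> fsame a b.
Proof.
move=> le_aK le_bK same i; have [le_iK|lt_Ki] := leqP i K; first exact: same.
by rewrite !nth_default //; apply: leq_trans lt_Ki.
Qed.

Lemma fval_fsame r a b : fsame a b -> fval r a = fval r b.
Proof.
move=> same; rewrite (@fval_widen r a (size a + size b)) ?leq_addr //.
rewrite (@fval_widen r b (size a + size b)) ?leq_addl //.
by under eq_bigr do rewrite same.
Qed.

Lemma flen_fsame a b : fsame a b -> flen a = flen b.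
Proof.
by move=> same; apply/eqP; rewrite -(eqr_nat rat) !flen_fval (fval_fsame _ same).
Qed.

Definition trade (a : seq nat) (i c t e : nat) : seq nat :=
  mkseq (fun j => nth 0 a j - (j == i) * c + (j == t) * e)%N
        (maxn (size a) (maxn i t).+1).

Lemma fval_trade r a i c t e : (c <= nth 0 a i)%N ->
  fval r (trade a i c t e) = fval r a - c%:R * r ^+ i + e%:R * r ^+ t.
Proof.
move=> le_ci; rewrite /trade; set M := maxn _ _.
have [le_aM lt_iM lt_tM] : [/\ (size a <= M)%N, (i < M)%N & (t < M)%N].
  by rewrite /M; split; lia.
rewrite {1}/fval size_mkseq (fval_widen r le_aM) -(sum_indicator _ c lt_iM).
rewrite -(sum_indicator _ e lt_tM) -sumrB -big_split /=.
apply: eq_bigr => j _; rewrite nth_mkseq // natrD natrB.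
  by rewrite mulrDl mulrBl.
by case: eqP => [->|]; rewrite ?mul1n ?mul0n.
Qed.

Lemma flen_trade a i c t e : (c <= nth 0 a i)%N ->
  (flen (trade a i c t e) + c = flen a + e)%N.
Proof.
move=> le_ci; apply/eqP; rewrite -(eqr_nat rat) !natrD !flen_fval.
by rewrite fval_trade // !expr1n !mulr1; apply/eqP; ring.
Qed.

(* With m = n(r), a termination measure for lengthening trades. *)
Definition fval_nat (m : nat) (a : seq nat) : nat :=
  \sum_(i < size a) nth 0 a i * m ^ i.

Lemma fval_nat_trade m a i c t e : (c <= nth 0 a i)%N ->
  (fval_nat m (trade a i c t e) + c * m ^ i = fval_nat m a + e * m ^ t)%N.
Proof.
have fval_natE b : (fval_nat m b)%:R = fval m%:R b.
  by rewrite natr_sum; apply: eq_bigr => j _; rewrite natrM natrX.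
move=> le_ci; apply/eqP; rewrite -(eqr_nat rat) !natrD !natrM !natrX.
by rewrite !fval_natE fval_trade //; apply/eqP; ring.
Qed.

Lemma fval_trade_down r a i : 0 <= r -> (nq r <= nth 0 a i)%N ->
  fval r (trade a i (nq r) i.+1 (dq r)) = fval r a.
Proof.
move=> r_ge0 le_ni.
by rewrite fval_trade // exprS mulrA [_ * r]mulrC mul_dq // addrNK.
Qed.

Lemma fval_trade_up r a i : 0 <= r -> (dq r <= nth 0 a i.+1)%N ->
  fval r (trade a i.+1 (dq r) i (nq r)) = fval r a.
Proof.
move=> r_ge0 le_di.
by rewrite fval_trade // exprS mulrA [_ * r]mulrC mul_dq // subrK.
Qed.

Definition nq_bounded r a := forall i, (i < size a)%N -> (nth 0 a i < nq r)%N.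
Definition dq_bounded r a := forall i, (0 < i < size a)%N -> (nth 0 a i < dq r)%N.

Section Uniqueness.

Variable r : rat.
Hypothesis r_gt0 : 0 < r.
Local Notation n := (nq r).
Local Notation d := (dq r).

Let psum (f : nat -> nat) K := \sum_(i < K.+1) (f i)%:R * r ^+ i.
Let psum_cleared (f : nat -> nat) K :=
  (\sum_(i < K.+1) f i * n ^ i * d ^ (K - i))%N.

Lemma psum_clear f K : psum f K * d%:R ^+ K = (psum_cleared f K)%:R.
Proof.
rewrite mulr_suml natr_sum; apply: eq_bigr => i _.
have le_iK : (i <= K)%N by rewrite -ltnS.
have -> : d%:R ^+ K = d%:R ^+ i * d%:R ^+ (K - i) :> rat by rewrite -exprD subnKC.
by rewrite !natrM !natrX -mul_dq ?ltW // exprMn; ring.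
Qed.

Lemma psum_eq_cleared f g K :
  psum f K = psum g K -> psum_cleared f K = psum_cleared g K.
Proof. by move=> eq_fg; apply/eqP; rewrite -(eqr_nat rat) -!psum_clear eq_fg. Qed.

Lemma psum_cleared_modn f K : psum_cleared f K = f 0%N * d ^ K %[mod n].
Proof.
rewrite /psum_cleared big_ord_recl /= expn0 muln1 subn0 -modnDmr.
suff /eqP -> : ((\sum_(i < K) f i.+1 * n ^ i.+1 * d ^ (K - i.+1)) %% n == 0)%N.
  by rewrite addn0.
by rewrite -/(dvdn _ _) dvdn_sum // => i _; rewrite expnS mulnCA -mulnA dvdn_mulr.
Qed.

Lemma psum_cleared_modd f K : psum_cleared f K = f K * n ^ K %[mod d].
Proof.
rewrite /psum_cleared big_ord_recr /= subnn expn0 muln1 -modnDml.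
suff /eqP -> : ((\sum_(i < K) f i * n ^ i * d ^ (K - i)) %% d == 0)%N by [].
rewrite -/(dvdn _ _) dvdn_sum // => i _.
by rewrite dvdn_mull // dvdn_exp ?subn_gt0.
Qed.

Lemma psum_eq_coef0 f g K : (f 0 < n)%N -> (g 0 < n)%N ->
  psum f K = psum g K -> f 0%N = g 0%N.
Proof.
move=> lt_f0 lt_g0 /psum_eq_cleared eq_fg.
have /eqP := congr1 (modn^~ n) eq_fg.
rewrite !psum_cleared_modn eqn_modMr_coprime ?coprimeXr ?coprime_num_den //.
by rewrite !modn_small // => /eqP.
Qed.

Lemma psum_eq_coef_top f g K : (f K < d)%N -> (g K < d)%N ->
  psum f K = psum g K -> f K = g K.
Proof.
move=> lt_fK lt_gK /psum_eq_cleared eq_fg.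
have /eqP := congr1 (modn^~ d) eq_fg.
rewrite !psum_cleared_modd eqn_modMr_coprime; last first.
  by rewrite coprimeXr // coprime_sym coprime_num_den.
by rewrite !modn_small // => /eqP.
Qed.

Lemma psum_nq_unique K f g : (forall i, f i < n)%N -> (forall i, g i < n)%N ->
  psum f K = psum g K -> forall i, (i <= K)%N -> f i = g i.
Proof.
elim: K f g => [|K IH] f g lt_f lt_g eq_fg.
  by case=> // _; apply: psum_eq_coef0 eq_fg.
have eq_f0 := psum_eq_coef0 (lt_f 0%N) (lt_g 0%N) eq_fg.
have tail h : psum h K.+1 = (h 0%N)%:R + r * psum (fun i => h i.+1) K.
  rewrite /psum big_ord_recl expr0 mulr1 mulr_sumr; congr (_ + _).
  by apply: eq_bigr => i _; rewrite /= exprS mulrCA.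
move: eq_fg; rewrite !tail eq_f0 => /addrI /(mulfI (lt0r_neq0 r_gt0)) eq_tail.
by case=> // i /IH-/(_ (fun j => f j.+1) (fun j => g j.+1)); apply.
Qed.

Lemma psum_dq_unique K f g :
  (forall i, 0 < i -> f i < d)%N -> (forall i, 0 < i -> g i < d)%N ->
  psum f K = psum g K -> forall i, (i <= K)%N -> f i = g i.
Proof.
move=> lt_f lt_g; elim: K => [|K IH] eq_fg.
  move: eq_fg; rewrite /psum !big_ord1 !expr0 !mulr1 => /eqP.
  by rewrite eqr_nat => /eqP eq_f0 [].
have eq_top := psum_eq_coef_top (lt_f K.+1 isT) (lt_g K.+1 isT) eq_fg.
move: eq_fg; rewrite /psum !(big_ord_recr K.+1) /= eq_top => /addIr /IH eq_init i.
by rewrite leq_eqVlt ltnS => /orP[/eqP ->|]; [|apply: eq_init].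
Qed.

Lemma nq_bounded_unique a b : nq_bounded r a -> nq_bounded r b ->
  fval r a = fval r b -> fsame a b.
Proof.
move=> small_a small_b; set K := (size a + size b)%N.
have [le_aK le_bK] : (size a <= K.+1)%N /\ (size b <= K.+1)%N by lia.
rewrite (fval_widen r le_aK) (fval_widen r le_bK) => /psum_nq_unique eq_ab.
apply: (fsame_prefix le_aK le_bK); apply: eq_ab => i;
  by apply: (@nth_ltn_pad _ predT) => //; apply: nq_gt0.
Qed.

Lemma dq_bounded_unique a b : dq_bounded r a -> dq_bounded r b ->
  fval r a = fval r b -> fsame a b.
Proof.
move=> small_a small_b; set K := (size a + size b)%N.
have [le_aK le_bK] : (size a <= K.+1)%N /\ (size b <= K.+1)%N by lia.
rewrite (fval_widen r le_aK) (fval_widen r le_bK) => /psum_dq_unique eq_ab.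
apply: (fsame_prefix le_aK le_bK); apply: eq_ab => i;
  by apply: (@nth_ltn_pad _ (fun i => 0 < i)%N) => //; apply: dq_gt0.
Qed.

End Uniqueness.

Section Extremal.

Variable r : rat.
Hypotheses (r_gt1 : 1 < r) (r_nonint : denq r != 1).
Local Notation n := (nq r).
Local Notation d := (dq r).

Let r_gt0 : 0 < r := lt_trans ltr01 r_gt1.
Let r_ge0 : 0 <= r := ltW r_gt0.

Lemma trade_down_shorter a i : (n <= nth 0 a i)%N ->
  exists2 b, fval r b = fval r a & (flen b < flen a)%N.
Proof.
move=> le_ni; exists (trade a i n i.+1 d); first exact: fval_trade_down.
by have := flen_trade i.+1 d le_ni; have := dq_lt_nq r_gt1; lia.
Qed.

Lemma trade_up_longer a i : (d <= nth 0 a i.+1)%N ->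
  exists b, [/\ fval r b = fval r a, (flen a < flen b)%N &
               (fval_nat n b < fval_nat n a)%N].
Proof.
move=> le_di; exists (trade a i.+1 d i n); split; first exact: fval_trade_up.
  by have := flen_trade i n le_di; have := dq_lt_nq r_gt1; lia.
have := fval_nat_trade n i n le_di; rewrite -expnS; have := dq_gt1 r_nonint.
have : (0 < n ^ i.+1)%N by rewrite expn_gt0 nq_gt0.
by move: (n ^ i.+1)%N => q; nia.
Qed.

Lemma exists_nq_bounded a :
  exists2 b, fval r b = fval r a /\ (flen b <= flen a)%N & nq_bounded r b.
Proof.
pose R b c := fval r c = fval r b /\ (flen c <= flen b)%N.
apply: (@descent _ R _ flen) => [b|b c e [eq_cb ?] [eq_ec ?]|b];
  [by []|by split; [rewrite eq_ec|lia]|].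
have [small|[i _ /trade_down_shorter[c eq_cb lt_cb]]] :=
  nth_ltn_or_geq n predT b; first by left.
by right; exists c => //; split; [|apply: ltnW].
Qed.

Lemma exists_dq_bounded a :
  exists2 b, fval r b = fval r a /\ (flen a <= flen b)%N & dq_bounded r b.
Proof.
pose R b c := fval r c = fval r b /\ (flen b <= flen c)%N.
apply: (@descent _ R _ (fval_nat n)) => [b|b c e [eq_cb ?] [eq_ec ?]|b];
  [by []|by split; [rewrite eq_ec|lia]|].
have [small|[[|i] // _ /trade_up_longer[c [eq_cb lt_bc lt_cb]]]] :=
  nth_ltn_or_geq d (fun i => 0 < i)%N b; first by left.
by right; exists c => //; split; [|apply: ltnW].
Qed.

Lemma isMinL_nq_bounded x a :
  isFact r x a -> isMinL r x (flen a) <-> nq_bounded r a.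
Proof.
move=> fact_a; split=> [[_ a_min]|small_a].
  have [//|[i _ /trade_down_shorter[b eq_ba lt_ba]]] := nth_ltn_or_geq n predT a.
  by have := a_min b (etrans eq_ba fact_a); rewrite leqNgt lt_ba.
split=> [|b fact_b]; first by exists a.
have [c [eq_cb le_cb] small_c] := exists_nq_bounded b.
have eq_ca : fval r c = fval r a by rewrite eq_cb fact_b fact_a.
by rewrite -(flen_fsame (nq_bounded_unique r_gt0 small_c small_a eq_ca)).
Qed.

Lemma isMaxL_dq_bounded x a :
  isFact r x a -> isMaxL r x (flen a) <-> dq_bounded r a.
Proof.
move=> fact_a; split=> [[_ a_max]|small_a].
  have [//|[[|i] // _ /trade_up_longer[b [eq_ba lt_ab _]]]] :=
    nth_ltn_or_geq d (fun i => 0 < i)%N a.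
  by have := a_max b (etrans eq_ba fact_a); rewrite leqNgt lt_ab.
split=> [|b fact_b]; first by exists a.
have [c [eq_cb le_bc] small_c] := exists_dq_bounded b.
have eq_ca : fval r c = fval r a by rewrite eq_cb fact_b fact_a.
by rewrite -(flen_fsame (dq_bounded_unique r_gt0 small_c small_a eq_ca)).
Qed.

End Extremal.

Theorem lemma3p2 (r : rat) (hr1 : 1 < r) (hrN : denq r != 1)
    (x : rat) (hx0 : x != 0) (alpha : seq nat) (hz : isFact r x alpha) :
  [/\ (isMinL r x (flen alpha) <->
         (forall i, (i < size alpha)%N -> (nth 0%N alpha i < nq r)%N)),
      (exists a, isFact r x a /\ isMinL r x (flen a) /\
         forall b, isFact r x b -> isMinL r x (flen b) -> fsame b a),
      (isMaxL r x (flen alpha) <->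
         (forall i, (1 <= i < size alpha)%N -> (nth 0%N alpha i < dq r)%N)),
      (exists a, isFact r x a /\ isMaxL r x (flen a) /\
         forall b, isFact r x b -> isMaxL r x (flen b) -> fsame b a) &
      ((uniqZ r x <-> uniqL r x) /\
       (uniqL r x ->
          (nth 0%N alpha 0 < nq r)%N /\
          (forall i, (1 <= i < size alpha)%N -> (nth 0%N alpha i < dq r)%N)))].
Proof.
have r_gt0 : 0 < r := lt_trans ltr01 hr1.
have minE := isMinL_nq_bounded hr1 hrN (x := x).
have maxE := isMaxL_dq_bounded hr1 hrN (x := x).
have [m [eq_m _] small_m] := exists_nq_bounded hr1 hrN alpha.
have [M [eq_M _] small_M] := exists_dq_bounded hr1 hrN alpha.
have fact_m : isFact r x m by rewrite /isFact eq_m.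
have fact_M : isFact r x M by rewrite /isFact eq_M.
have all_min : uniqL r x -> forall c, isFact r x c -> nq_bounded r c.
  by move=> uL c fact_c; apply/(minE _ fact_c); rewrite (uL c m) //; apply/minE.
have all_max : uniqL r x -> forall c, isFact r x c -> dq_bounded r c.
  by move=> uL c fact_c; apply/(maxE _ fact_c); rewrite (uL c M) //; apply/maxE.
split; [exact: minE| |exact: maxE| |split].
- exists m; split=> //; split=> [|b fact_b /(minE _ fact_b) small_b].
    exact/minE.
  by apply: (nq_bounded_unique r_gt0) small_b small_m _; rewrite fact_b fact_m.
- exists M; split=> //; split=> [|b fact_b /(maxE _ fact_b) small_b].
    exact/maxE.
  by apply: (dq_bounded_unique r_gt0) small_b small_M _; rewrite fact_b fact_M.
- split=> [uZ a b fact_a fact_b|uL a b fact_a fact_b].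
    exact/flen_fsame/uZ.
  apply: (nq_bounded_unique r_gt0) (all_min uL a fact_a) (all_min uL b fact_b) _.
  by rewrite fact_a fact_b.
- move=> uL; split; last exact: all_max.
  by apply: (@nth_ltn_pad _ predT) (all_min uL _ hz) 0%N _; rewrite ?nq_gt0.
Qed.
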